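(* Let $X=\{0,1,2,3\}$ and let $a,b,c$ be the transformations of $X^\ast$ defined recursively (with $\emptyset\mapsto\emptyset$) by $a(0w)=1\,a(w)$, $a(1w)=0w$, $a(2w)=2w$, $a(3w)=3w$; $b(0w)=2\,b(w)$, $b(2w)=0w$, $b(1w)=1w$, $b(3w)=3w$; $c(0w)=3\,c(w)$, $c(3w)=0w$, $c(1w)=1w$, $c(2w)=2w$. For $n\ge 1$ let $A_n=a_n+a_n^{-1}+b_n+b_n^{-1}+c_n+c_n^{-1}$, where $a_n,b_n,c_n$ are the $4^n\times 4^n$ permutation matrices of the actions of $a,b,c$ on $X^n$, and let $P_n(\lambda)=\det(\lambda I-A_n)$. Then for every $n\ge1$, $$P_{n+1}(\lambda)=(\lambda-4)^{2\cdot 4^n}\,P_n(f(\lambda)),\qquad f(\lambda)=\lambda^2-4\lambda-6,$$ and $P_1(\lambda)=(\lambda-6)(\lambda+2)(\lambda-4)^2$.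
   Context: $A_n$ is the adjacency matrix of the $n$-th Schreier graph of the group generated by $a,b,c$ (the star automaton group of the star with 3 leaves) acting on words of length $n$; $P_n$ is its (monic) characteristic polynomial. *)

From HB Require Import structures.
From mathcomp Require Import all_boot all_order all_algebra.
Set Implicit Arguments. Unset Strict Implicit. Unset Printing Implicit Defensive.
Import Order.TTheory GRing.Theory Num.Theory.
Local Open Scope ring_scope.

Definition letter := 'I_4.

(* The generator acting on the "branch" k (k = 1 for a, 2 for b, 3 for c):
     g(0w) = k g(w),  g(kw) = 0w,  g(xw) = xw otherwise,  g(empty) = empty. *)
Fixpoint gen (k : letter) (w : seq letter) : seq letter :=
  match w with
  | [::] => [::]
  | x :: w' => if nat_of_ord x == 0%N then k :: gen k w'
               else if x == k then (ord0 : letter) :: w'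
               else x :: w'
  end.

Definition la : letter := inord 1.
Definition lb : letter := inord 2.
Definition lc : letter := inord 3.

Definition word (n : nat) := n.-tuple letter.
Definition N (n : nat) := #|{: word n}|.

Definition permM (k : letter) (n : nat) : 'M[int]_(N n) :=
  \matrix_(i, j) ((gen k (val (enum_val i)) == val (enum_val j)) : bool)%:R.

Definition Amx (n : nat) : 'M[int]_(N n) :=
  permM la n + invmx (permM la n) + permM lb n + invmx (permM lb n)
  + permM lc n + invmx (permM lc n).

Definition Pn (n : nat) : {poly int} := char_poly (Amx n).

Definition fpoly : {poly int} := 'X^2 - 4%:P * 'X - 6%:P.

(* perm is imported first so that Defs.permM is not shadowed by perm.permM. *)
From mathcomp Require Import fingroup perm.
From Pilot Require Import Defs.
From HB Require Import structures.
From mathcomp Require Import all_boot all_order all_algebra.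
From mathcomp Require Import ring zify.
Set Implicit Arguments. Unset Strict Implicit. Unset Printing Implicit Defensive.
Import GRing.Theory.
Local Open Scope ring_scope.

(* Listing the words of length n+1 by their first letter 0, 1, 2, 3 puts
   A_(n+1) in the block form [[0, B], [B^T, 4]] with B = (1 + a_n | 1 + b_n | 1 + c_n):
   every generator moves a word starting with 0 to another first letter, and a
   word starting with k <> 0 is fixed by the two generators of the other branches.
   Taking the Schur complement of the scalar block 4 gives
   P_(n+1)(x) = (x - 4)^(2 * 4^n) det(x (x - 4) - B B^T), and since a_n, b_n, c_n
   are permutation matrices, B B^T = 6 + A_n; as x (x - 4) - 6 = f(x), the
   determinant is P_n(f(x)). *)

Section CharPoly.
Variable R : comNzRingType.

Lemma char_poly_reindex m p (A : 'M[R]_m) (h : 'I_p -> 'I_m) :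
  p = m -> injective h -> char_poly (\matrix_(i, j) A (h i) (h j)) = char_poly A.
Proof.
move=> epm; subst p => h_inj; pose s := perm h_inj; rewrite /char_poly.
have -> : char_poly_mx (\matrix_(i, j) A (h i) (h j))
          = row_perm s (col_perm s (char_poly_mx A)).
  by apply/matrixP => i j; rewrite !mxE !permE (inj_eq h_inj).
rewrite row_permE col_permE !det_mulmx !det_perm odd_permV.
by rewrite mulrCA -signr_addb addbb mulr1.
Qed.

Lemma char_poly_comp n (A : 'M[R]_n) p :
  char_poly A \Po p = \det (p%:M - map_mx polyC A).
Proof.
rewrite /char_poly -det_map_mx /char_poly_mx map_mxB map_scalar_mx /= comp_polyX.
by congr (\det (_ - _)); apply/matrixP => i j; rewrite !mxE /= comp_polyC.
Qed.

Lemma char_poly_shift n (A : 'M[R]_n) a :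
  char_poly (a%:M + A) = char_poly A \Po ('X - a%:P).
Proof.
rewrite char_poly_comp /char_poly /char_poly_mx map_mxD map_scalar_mx /=.
by rewrite opprD addrA -raddfB.
Qed.

End CharPoly.

Lemma char_poly_schur (R : idomainType) m k (B : 'M[R]_(m, k)) c :
  (m <= k)%N ->
  char_poly (block_mx 0 B B^T c%:M)
  = ('X - c%:P) ^+ (k - m) * (char_poly (B *m B^T) \Po ('X * ('X - c%:P))).
Proof.
move=> le_mk; set q := 'X - c%:P; set B' := map_mx polyC B.
have cpE : char_poly_mx (block_mx 0 B B^T c%:M)
           = block_mx 'X%:M (- B') (- B'^T) q%:M.
  rewrite /char_poly_mx map_block_mx (scalar_mx_block m k) opp_block_mx add_block_mx.
  by rewrite map_mx0 oppr0 addr0 !add0r map_trmx map_scalar_mx /= raddfB.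
have schurE : char_poly_mx (block_mx 0 B B^T c%:M) *m block_mx q%:M 0 B'^T 1%:M
              = block_mx (('X * q)%:M - B' *m B'^T) (- B') 0 q%:M.
  rewrite cpE mulmx_block !mulmx0 !mulmx1 !add0r scalar_mxM !mulNmx.
  by rewrite !mul_mx_scalar mul_scalar_mx addNr.
have := congr1 determinant schurE.
rewrite det_mulmx det_lblock det_ublock !det_scalar expr1n mulr1 /B'.
rewrite map_trmx -map_mxM -(char_poly_comp (B *m B^T)) => detE.
have q_neq0 : q ^+ m != 0 by rewrite expf_neq0 // monic_neq0 // monicXsubC.
by apply: (mulIf q_neq0); rewrite detE mulrAC -exprD subnK // mulrC.
Qed.

Lemma invmx_perm_mx (R : comUnitRingType) n (s : 'S_n) :
  invmx (perm_mx s) = (perm_mx s)^T :> 'M[R]_n.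
Proof.
have mulV : perm_mx s *m perm_mx s^-1 = 1%:M :> 'M[R]_n.
  by rewrite -perm_mxM mulgV perm_mx1.
have [s_unit _] := mulmx1_unit mulV.
by rewrite tr_perm_mx -[LHS]mulmx1 -mulV mulmxA mulVmx // mul1mx.
Qed.

Lemma add1_perm_mx_mul_tr (R : pzRingType) n (s : 'S_n) :
  (1%:M + perm_mx s) *m (1%:M + perm_mx s)^T
  = 2%:M + (perm_mx s + (perm_mx s)^T) :> 'M[R]_n.
Proof.
rewrite linearD /= trmx1 mulmxDl !mulmxDr !mul1mx mulmx1.
rewrite tr_perm_mx -perm_mxM mulgV perm_mx1.
rewrite [2%:M]raddfMn /= mulr2n addrC -!addrA addrCA.
by congr (_ + _); rewrite addrCA.
Qed.

Lemma gen_size k w : size (gen k w) = size w.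
Proof. by elim: w => //= x w IHw; case: ifP => _ /=; rewrite ?IHw //; case: ifP. Qed.

Fixpoint gen_inv (k : letter) (w : seq letter) : seq letter :=
  match w with
  | [::] => [::]
  | y :: v => if y == k then ord0 :: gen_inv k v
              else if y == ord0 then k :: v else y :: v
  end.

Lemma genK k : cancel (gen k) (gen_inv k).
Proof.
elim=> [|x u IHu] //=; case: ifP => [/eqP x0 | x0] /=.
  by rewrite eqxx IHu (_ : x = ord0) //; apply: val_inj.
case: ifP => [/eqP <- | xk] /=; last by rewrite xk -val_eqE /= x0.
by rewrite -val_eqE /= eq_sym x0.
Qed.

Lemma gen_tupleP k n (w : word n) : size (gen k w) == n.
Proof. by rewrite gen_size size_tuple. Qed.

Definition gen_tuple k n (w : word n) : word n := Tuple (gen_tupleP k w).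

Lemma gen_tuple_inj k n : injective (@gen_tuple k n).
Proof. by move=> u v /(congr1 val) /(can_inj (genK k)) /val_inj. Qed.

Definition gen_perm (k : letter) (n : nat) : 'S_(N n) :=
  perm (inj_comp (@enum_rank_inj _) (inj_comp (@gen_tuple_inj k n) (@enum_val_inj _ _))).

Lemma permM_perm_mx k n : permM k n = perm_mx (gen_perm k n).
Proof.
apply/matrixP => i j; rewrite !mxE permE /=.
by rewrite -(inj_eq enum_val_inj) enum_rankK -val_eqE.
Qed.

Lemma Amx_permM n :
  Amx n = permM la n + (permM la n)^T + permM lb n + (permM lb n)^T
          + permM lc n + (permM lc n)^T.
Proof. by rewrite /Amx !permM_perm_mx !invmx_perm_mx. Qed.

Definition Bmx n : 'M[int]_(N n, N n + (N n + N n)) :=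
  row_mx (1%:M + permM la n) (row_mx (1%:M + permM lb n) (1%:M + permM lc n)).

Lemma Bmx_mul_tr n : Bmx n *m (Bmx n)^T = 6%:M + Amx n.
Proof.
rewrite /Bmx !tr_row_mx !mul_row_col Amx_permM !permM_perm_mx !add1_perm_mx_mul_tr.
by apply/matrixP => i j; rewrite !mxE; ring.
Qed.

Lemma inord_ordinal n k (lt_kn : (k < n.+1)%N) : inord k = Ordinal lt_kn.
Proof. by apply: val_inj; rewrite /= inordK. Qed.

Lemma split_lshift m n (j : 'I_m) : split (lshift n j) = inl j.
Proof. exact: (unsplitK (inl j)). Qed.

Lemma split_rshift m n (j : 'I_n) : split (rshift m j) = inr j.
Proof. exact: (unsplitK (inr j)). Qed.

Section FirstLetter.
Variable n : nat.
Local Notation m := (N n).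

Definition block_word (i : 'I_(m + (m + (m + m)))) : letter * 'I_m :=
  match split i with
  | inl j => (ord0, j)
  | inr i' => match split i' with
    | inl j => (la, j)
    | inr i'' => match split i'' with inl j => (lb, j) | inr j => (lc, j) end
    end
  end.

Lemma block_ind (P : 'I_(m + (m + (m + m))) -> Prop) :
  (forall j, P (lshift _ j)) -> (forall j, P (rshift _ (lshift _ j))) ->
  (forall j, P (rshift _ (rshift _ (lshift _ j)))) ->
  (forall j, P (rshift _ (rshift _ (rshift _ j)))) -> forall i, P i.
Proof.
move=> P0 P1 P2 P3 i; rewrite -(splitK i); case: (split i) => [j | i'] //=.
rewrite -(splitK i'); case: (split i') => [j | i''] //=.
by rewrite -(splitK i''); case: (split i'').
Qed.

Definition splitE := (split_lshift, split_rshift).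

Lemma block_word_inj : injective block_word.
Proof.
elim/block_ind => j; elim/block_ind => j'.
all: rewrite /block_word !splitE /la /lb /lc ?inord_ordinal //.
all: by case=> ->.
Qed.

Definition block_index i : 'I_(N n.+1) :=
  enum_rank (cons_tuple (block_word i).1 (enum_val (block_word i).2) : word n.+1).

Lemma block_index_inj : injective block_index.
Proof.
move=> i i' /enum_rank_inj /(congr1 val) /= [e1 /val_inj /enum_val_inj e2].
by apply: block_word_inj; rewrite [block_word i]surjective_pairing e1 e2 -surjective_pairing.
Qed.

Lemma block_indexE i :
  val (enum_val (block_index i)) = (block_word i).1 :: val (enum_val (block_word i).2).
Proof. by rewrite /block_index enum_rankK. Qed.

Lemma block_mx_Amx_succ i j :
  block_mx 0 (Bmx n) (Bmx n)^T 4%:M i j = Amx n.+1 (block_index i) (block_index j).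
Proof.
rewrite Amx_permM !mxE !block_indexE (scalar_mx_block m (m + m)) scalar_mx_block.
rewrite /Bmx !tr_row_mx.
move: i j; elim/block_ind => i; elim/block_ind => j; rewrite /block_word !splitE /=.
all: rewrite ?(block_mxEul, block_mxEur, block_mxEdl, block_mxEdr).
all: rewrite ?(row_mxEl, row_mxEr, col_mxEu, col_mxEd).
all: rewrite !mxE /la /lb /lc !inord_ordinal //= !eqseq_cons /=.
all: by rewrite !val_eqE !(inj_eq enum_val_inj) ?[j == i]eq_sym; ring.
Qed.
End FirstLetter.

Lemma N_exp n : N n = (4 ^ n)%N.
Proof. by rewrite /N card_tuple card_ord. Qed.

Lemma char_poly_Amx_succ n :
  char_poly (Amx n.+1) = char_poly (block_mx 0 (Bmx n) (Bmx n)^T 4%:M).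
Proof.
rewrite -(char_poly_reindex _ _ (@block_index_inj n)); last by rewrite !N_exp expnS; lia.
by congr char_poly; apply/matrixP => i j; rewrite mxE block_mx_Amx_succ.
Qed.

Lemma Pn_succ n : Pn n.+1 = ('X - 4%:P) ^+ (2 * 4 ^ n) * (Pn n \Po fpoly).
Proof.
rewrite /Pn char_poly_Amx_succ char_poly_schur; last by rewrite leq_addr.
rewrite Bmx_mul_tr char_poly_shift -comp_polyA comp_polyB comp_polyX comp_polyC.
by rewrite addKn addnn -mul2n -N_exp /fpoly; congr (_ * (_ \Po _)); ring.
Qed.

Lemma Amx0 : Amx 0 = 6%:M.
Proof.
apply/matrixP => i j; have ij : i = j.
  apply: val_inj => /=; move: (ltn_ord i) (ltn_ord j) (N_exp 0); rewrite expn0; lia.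
by rewrite -ij Amx_permM !mxE !eqxx (tuple0 (enum_val i)).
Qed.

Lemma Pn0 : Pn 0 = 'X - 6%:P.
Proof.
by rewrite /Pn /char_poly /char_poly_mx Amx0 map_scalar_mx -raddfB det_scalar N_exp expr1.
Qed.

Theorem theorem3p2 :
  (forall n : nat, (1 <= n)%N ->
     Pn n.+1 = ('X - 4%:P) ^+ (2 * 4 ^ n) * (Pn n \Po fpoly))
  /\ Pn 1 = ('X - 6%:P) * ('X + 2%:P) * ('X - 4%:P) ^+ 2.
Proof.
split=> [n _|]; first exact: Pn_succ.
by rewrite Pn_succ Pn0 comp_polyB comp_polyX comp_polyC /fpoly; ring.
Qed.
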